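(* For every $\mathsf T$-term $P$ and every $*$-term $Q$, the tree $se(P\land^\circ Q)$ has exactly one $\mathsf T$-$*$-decomposition, namely $(se(P)[\mathsf T\mapsto\triangle],\,se(Q))$.
   Context: Let $A$ be a nonempty set of atoms; terms are closed terms over constants $\mathsf T,\mathsf F$, atoms $a\in A$, unary $\neg$, binary $\land^\circ$, $\lor^\circ$. Evaluation trees $\mathcal T_A$: $\mathsf T,\mathsf F\in\mathcal T_A$ and $(X\unlhd a\unrhd Y)\in\mathcal T_A$ for $X,Y\in\mathcal T_A$, $a\in A$; depth $d(\mathsf T)=d(\mathsf F)=0$, $d(Y\unlhd a\unrhd Z)=1+\max(d(Y),d(Z))$. $\mathcal T_{A,\triangle}$: the same with leaves in $\{\mathsf T,\mathsf F,\triangle\}$. Leaf replacement $X[\ell_1\mapsto Y_1,\ldots]$ replaces every leaf labelled $\ell_i$ by $Y_i$. $se$: $se(\mathsf T)=\mathsf T$, $se(\mathsf F)=\mathsf F$, $se(a)=\mathsf T\unlhd a\unrhd\mathsf F$, $se(\neg P)=se(P)[\mathsf T\mapsto\mathsf F,\mathsf F\mapsto\mathsf T]$, $se(P\land^\circ Q)=se(P)[\mathsf T\mapsto se(Q)]$, $se(P\lor^\circ Q)=se(P)[\mathsf F\mapsto se(Q)]$. Syntactic categories ($a\in A$): $\mathsf T$-terms $P^{\mathsf T}::=\mathsf T\mid(a\land^\circ P^{\mathsf T})\lor^\circ P^{\mathsf T}$; $\mathsf F$-terms $P^{\mathsf F}::=\mathsf F\mid(a\lor^\circ P^{\mathsf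 F})\land^\circ P^{\mathsf F}$; $\ell$-terms $P^\ell::=(a\land^\circ P^{\mathsf T})\lor^\circ P^{\mathsf F}\mid(\neg a\land^\circ P^{\mathsf T})\lor^\circ P^{\mathsf F}$; $*$-terms $P^*::=P^c\mid P^d$, $P^c::=P^\ell\mid P^*\land^\circ P^d$, $P^d::=P^\ell\mid P^*\lor^\circ P^c$. A pair $(Y,Z)\in\mathcal T_{A,\triangle}\times\mathcal T_A$ is a candidate $\mathsf T$-$*$-decomposition (ctsd) of $X\in\mathcal T_A$ if $X=Y[\triangle\mapsto Z]$, $Y$ contains neither $\mathsf T$ nor $\mathsf F$, $Z$ contains both $\mathsf T$ and $\mathsf F$, and there is no pair $(U,V)\in\mathcal T_{A,\triangle}\times\mathcal T_A$ with $Z=U[\triangle\mapsto V]$, $U$ containing $\triangle$, $U\neq\triangle$, and $U$ containing neither $\mathsf T$ nor $\mathsf F$. A ctsd $(Y,Z)$ of $X$ is a $\mathsf T$-$*$-decomposition (tsd) if there is no other ctsd $(Y',Z')$ of $X$ with $d(Z')<d(Z)$. *)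

From Stdlib Require Import Arith.
Set Implicit Arguments.

Section Defs.
Variable A : Type.

(* closed terms over T, F, atoms, negation, left-sequential and/or *)
Inductive term : Type :=
| TT : term
| FF : term
| At : A -> term
| Neg : term -> term
| AndS : term -> term -> term
| OrS : term -> term -> term.

(* Trees of T_{A,triangle}; T_A is the subset with no triangle leaf. *)
Inductive tree : Type :=
| LT : tree
| LF : tree
| LD : tree                     (* the leaf triangle *)
| Node : tree -> A -> tree -> tree.  (* Node X a Y  =  X <| a |> Y *)

Fixpoint depth (X : tree) : nat :=
  match X with
  | Node Y _ Z => S (Nat.max (depth Y) (depth Z))
  | _ => 0
  end.

(* simultaneous leaf replacement X[T |-> yT, F |-> yF, triangle |-> yD] *)
Fixpoint repl (yT yF yD : tree) (X : tree) : tree :=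
  match X with
  | LT => yT
  | LF => yF
  | LD => yD
  | Node Y a Z => Node (repl yT yF yD Y) a (repl yT yF yD Z)
  end.

Fixpoint hasT (X : tree) : bool :=
  match X with LT => true | Node Y _ Z => hasT Y || hasT Z | _ => false end.
Fixpoint hasF (X : tree) : bool :=
  match X with LF => true | Node Y _ Z => hasF Y || hasF Z | _ => false end.
Fixpoint hasD (X : tree) : bool :=
  match X with LD => true | Node Y _ Z => hasD Y || hasD Z | _ => false end.

Definition inTA (X : tree) : Prop := hasD X = false.

Definition substD (Y Z : tree) : tree := repl LT LF Z Y.

(* short-circuit evaluation *)
Fixpoint se (P : term) : tree :=
  match P with
  | TT => LT
  | FF => LF
  | At a => Node LT a LF
  | Neg P => repl LF LT LD (se P)
  | AndS P Q => repl (se Q) LF LD (se P)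
  | OrS P Q => repl LT (se Q) LD (se P)
  end.

Inductive Tterm : term -> Prop :=
| Tterm_T : Tterm TT
| Tterm_step : forall a P1 P2, Tterm P1 -> Tterm P2 ->
    Tterm (OrS (AndS (At a) P1) P2).

Inductive Fterm : term -> Prop :=
| Fterm_F : Fterm FF
| Fterm_step : forall a P1 P2, Fterm P1 -> Fterm P2 ->
    Fterm (AndS (OrS (At a) P1) P2).

Inductive lterm : term -> Prop :=
| lterm_pos : forall a P1 P2, Tterm P1 -> Fterm P2 ->
    lterm (OrS (AndS (At a) P1) P2)
| lterm_neg : forall a P1 P2, Tterm P1 -> Fterm P2 ->
    lterm (OrS (AndS (Neg (At a)) P1) P2).

Inductive sterm : term -> Prop :=
| sterm_c : forall P, cterm P -> sterm P
| sterm_d : forall P, dterm P -> sterm P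
with cterm : term -> Prop :=
| cterm_l : forall P, lterm P -> cterm P
| cterm_and : forall P Q, sterm P -> dterm Q -> cterm (AndS P Q)
with dterm : term -> Prop :=
| dterm_l : forall P, lterm P -> dterm P
| dterm_or : forall P Q, sterm P -> cterm Q -> dterm (OrS P Q).

(* candidate T-*-decomposition (Y,Z) of X (X, Z in T_A, Y in T_{A,triangle}) *)
Definition ctsd (X Y Z : tree) : Prop :=
  inTA Z /\
  X = substD Y Z /\
  hasT Y = false /\ hasF Y = false /\
  hasT Z = true /\ hasF Z = true /\
  ~ (exists U V, inTA V /\ Z = substD U V /\ hasD U = true /\ U <> LD /\
                 hasT U = false /\ hasF U = false).

Definition tsd (X Y Z : tree) : Prop :=
  ctsd X Y Z /\
  ~ (exists Y' Z', ctsd X Y' Z' /\ (Y', Z') <> (Y, Z) /\ depth Z' < depth Z).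

End Defs.

Arguments LT {A}.
Arguments LF {A}.
Arguments LD {A}.
Arguments TT {A}.
Arguments FF {A}.

(* For a T-term P the tree se(P) has T-leaves but no F-leaves, so se(P ∧° Q) is
   se(P) with se(Q) grafted at every T-leaf, i.e. substD (se(P)[T ↦ △]) (se Q).
   For a *-term Q the tree se(Q) contains both T and F and is irreducible: it is
   not a nontrivial △-only context filled with a tree.  This is proved by
   induction on *-terms, since grafting irreducible trees into the T-leaves (or
   F-leaves) of an irreducible tree yields an irreducible tree; the key fact is
   that grafting a tree W at the T-leaves is injective, because the result is
   strictly deeper than W unless it is W itself.  Finally, a filling of a
   △-only context by an irreducible tree determines both the context and the
   filling, so the candidate above is the only candidate decomposition and
   therefore the only T-*-decomposition. *)
From Stdlib Require Import Arith Lia Bool Btauto.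

Section Trees.
Variable A : Type.
Notation tree := (tree A).

Lemma hasT_repl (yT yF yD X : tree) :
  hasT (repl yT yF yD X) = hasT X && hasT yT || hasF X && hasT yF || hasD X && hasT yD.
Proof. induction X as [| | | X1 IH1 a X2 IH2]; simpl; try rewrite IH1, IH2; btauto. Qed.

Lemma hasF_repl (yT yF yD X : tree) :
  hasF (repl yT yF yD X) = hasT X && hasF yT || hasF X && hasF yF || hasD X && hasF yD.
Proof. induction X as [| | | X1 IH1 a X2 IH2]; simpl; try rewrite IH1, IH2; btauto. Qed.

Lemma hasD_repl (yT yF yD X : tree) :
  hasD (repl yT yF yD X) = hasT X && hasD yT || hasF X && hasD yF || hasD X && hasD yD.
Proof. induction X as [| | | X1 IH1 a X2 IH2]; simpl; try rewrite IH1, IH2; btauto. Qed.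

Lemma has_leaf (X : tree) : hasT X || hasF X || hasD X = true.
Proof.
  induction X as [| | | X1 IH1 a X2 IH2]; simpl; auto.
  destruct (hasT X1), (hasF X1), (hasD X1); simpl in *; rewrite ?orb_true_r; auto.
Qed.

Lemma pure_hasD (U : tree) : hasT U = false -> hasF U = false -> hasD U = true.
Proof. intros HT HF. generalize (has_leaf U). now rewrite HT, HF. Qed.

Lemma hasT_substD_pure (U V : tree) :
  hasT U = false -> hasF U = false -> hasT (substD U V) = hasT V.
Proof. intros HT HF. unfold substD. rewrite hasT_repl, HT, HF, pure_hasD; auto. Qed.

Lemma hasF_substD_pure (U V : tree) :
  hasT U = false -> hasF U = false -> hasF (substD U V) = hasF V.
Proof. intros HT HF. unfold substD. rewrite hasF_repl, HT, HF, pure_hasD; auto. Qed.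

Lemma repl_repl (yT yF yD zT zF zD X : tree) :
  repl yT yF yD (repl zT zF zD X) =
  repl (repl yT yF yD zT) (repl yT yF yD zF) (repl yT yF yD zD) X.
Proof. induction X; simpl; congruence. Qed.

Lemma repl_hasD_false (yT yF yD yD' X : tree) :
  hasD X = false -> repl yT yF yD X = repl yT yF yD' X.
Proof.
  induction X; simpl; intros H; try discriminate; auto.
  apply orb_false_iff in H as [H1 H2]. now rewrite IHX1, IHX2.
Qed.

Lemma repl_hasT_false (yT X : tree) : hasT X = false -> repl yT LF LD X = X.
Proof.
  induction X; simpl; intros H; try discriminate; auto.
  apply orb_false_iff in H as [H1 H2]. now rewrite IHX1, IHX2.
Qed.

Lemma repl_hasF_false (yF X : tree) : hasF X = false -> repl LT yF LD X = X.
Proof.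
  induction X; simpl; intros H; try discriminate; auto.
  apply orb_false_iff in H as [H1 H2]. now rewrite IHX1, IHX2.
Qed.

Lemma depth_le_repl_hasT (yT yF yD X : tree) :
  hasT X = true -> depth yT <= depth (repl yT yF yD X).
Proof.
  induction X as [| | | X1 IH1 a X2 IH2]; simpl; intros H; try discriminate; auto.
  apply orb_true_iff in H as [H|H]; [specialize (IH1 H) | specialize (IH2 H)]; lia.
Qed.

Lemma depth_le_repl_hasF (yT yF yD X : tree) :
  hasF X = true -> depth yF <= depth (repl yT yF yD X).
Proof.
  induction X as [| | | X1 IH1 a X2 IH2]; simpl; intros H; try discriminate; auto.
  apply orb_true_iff in H as [H|H]; [specialize (IH1 H) | specialize (IH2 H)]; lia.
Qed.

Lemma repl_T_Node_neq (W X1 X2 : tree) a :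
  hasT W = true -> repl W LF LD (Node X1 a X2) <> W.
Proof.
  intros HW E. destruct (hasT (Node X1 a X2)) eqn:HT.
  - assert (Hd : depth W < depth (repl W LF LD (Node X1 a X2))).
    { simpl in *. apply orb_true_iff in HT as [H|H];
        [pose proof (depth_le_repl_hasT W LF LD X1 H) |
         pose proof (depth_le_repl_hasT W LF LD X2 H)]; lia. }
    rewrite E in Hd. lia.
  - rewrite repl_hasT_false in E by exact HT. subst W. congruence.
Qed.

Lemma repl_F_Node_neq (W X1 X2 : tree) a :
  hasF W = true -> repl LT W LD (Node X1 a X2) <> W.
Proof.
  intros HW E. destruct (hasF (Node X1 a X2)) eqn:HF.
  - assert (Hd : depth W < depth (repl LT W LD (Node X1 a X2))).
    { simpl in *. apply orb_true_iff in HF as [H|H];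
        [pose proof (depth_le_repl_hasF LT W LD X1 H) |
         pose proof (depth_le_repl_hasF LT W LD X2 H)]; lia. }
    rewrite E in Hd. lia.
  - rewrite repl_hasF_false in E by exact HF. subst W. congruence.
Qed.

Definition irreducible (Z : tree) : Prop :=
  ~ (exists U V, inTA V /\ Z = substD U V /\ hasD U = true /\ U <> LD /\
                 hasT U = false /\ hasF U = false).

Lemma irreducible_LT : irreducible LT.
Proof. intros (U & V & _ & E & _ & HU & HT & _). destruct U; easy. Qed.

Lemma irreducible_LF : irreducible LF.
Proof. intros (U & V & _ & E & _ & HU & _ & HF). destruct U; easy. Qed.

Lemma substD_pure_reducible {U V : tree} :
  hasT U = false -> hasF U = false -> U <> LD -> inTA V -> ~ irreducible (substD U V).
Proof. intros HT HF HU HV IUV. apply IUV. exists U, V. auto 7 using pure_hasD. Qed.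

(* Filling a △-only context with V gives both sides exactly the leaves of V. *)
Lemma irreducible_Node (L R : tree) a :
  hasT L && hasT R = false -> hasF L && hasF R = false -> irreducible (Node L a R).
Proof.
  intros HT HF (U & V & HV & E & _ & HU & HUT & HUF).
  destruct U as [| | |U1 b U2]; try discriminate; try easy.
  simpl in HUT, HUF. apply orb_false_iff in HUT as [HT1 HT2], HUF as [HF1 HF2].
  injection E as -> _ ->. fold (substD U1 V) (substD U2 V) in HT, HF.
  rewrite !hasT_substD_pure, andb_diag in HT by assumption.
  rewrite !hasF_substD_pure, andb_diag in HF by assumption.
  generalize (has_leaf V). unfold inTA in HV. now rewrite HT, HF, HV.
Qed.

Lemma substD_pure_irreducible_inj (Y Y' Z Z' : tree) :
  hasT Y = false -> hasF Y = false -> hasT Y' = false -> hasF Y' = false ->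
  irreducible Z -> irreducible Z' -> inTA Z -> inTA Z' ->
  substD Y Z = substD Y' Z' -> Y = Y' /\ Z = Z'.
Proof.
  revert Y'. induction Y as [| | |Y1 IH1 a Y2 IH2];
    intros Y' HT HF HT' HF' IZ IZ' TZ TZ' E; try discriminate;
    destruct Y' as [| | |Y1' a' Y2']; try discriminate.
  - easy.
  - destruct (substD_pure_reducible HT' HF' ltac:(discriminate) TZ'). now rewrite <- E.
  - destruct (substD_pure_reducible HT HF ltac:(discriminate) TZ). now rewrite E.
  - simpl in HT, HF, HT', HF'.
    apply orb_false_iff in HT as [HT1 HT2], HF as [HF1 HF2],
      HT' as [HT1' HT2'], HF' as [HF1' HF2'].
    injection E as E1 -> E2.
    destruct (IH1 Y1' HT1 HF1 HT1' HF1' IZ IZ' TZ TZ' E1) as [-> ->].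
    destruct (IH2 Y2' HT2 HF2 HT2' HF2' IZ IZ' TZ TZ' E2) as [-> _].
    auto.
Qed.

Section Grafting.
Variables yT yF : tree.

Lemma repl_injective :
  yT <> yF ->
  (forall X1 a X2, repl yT yF LD (Node X1 a X2) <> yT) ->
  (forall X1 a X2, repl yT yF LD (Node X1 a X2) <> yF) ->
  forall X Y : tree, hasD X = false -> hasD Y = false ->
  repl yT yF LD X = repl yT yF LD Y -> X = Y.
Proof.
  intros HTF HnT HnF X. induction X as [| | |X1 IH1 a X2 IH2];
    intros [| | |Y1 b Y2] HX HY E; simpl in E; try discriminate; try easy.
  - exfalso. apply (HnT Y1 b Y2). simpl. congruence.
  - now destruct HTF.
  - exfalso. apply (HnF Y1 b Y2). simpl. congruence.
  - exfalso. apply (HnT X1 a X2). simpl. congruence.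
  - exfalso. apply (HnF X1 a X2). simpl. congruence.
  - simpl in HX, HY. apply orb_false_iff in HX as [? ?], HY as [? ?].
    injection E as E1 -> E2. f_equal; auto.
Qed.

Hypothesis irreducible_yT : irreducible yT.
Hypothesis irreducible_yF : irreducible yF.
Hypothesis repl_inj : forall X Y : tree, hasD X = false -> hasD Y = false ->
  repl yT yF LD X = repl yT yF LD Y -> X = Y.

Lemma repl_eq_substD_pure (U : tree) :
  hasT U = false -> hasF U = false ->
  forall X V, hasD X = false -> inTA V -> repl yT yF LD X = substD U V ->
  exists S, hasD S = false /\ X = substD U S /\ V = repl yT yF LD S.
Proof.
  induction U as [| | |U1 IH1 b U2 IH2]; intros HT HF X V HX HV E; try discriminate.
  - now exists X.
  - assert (HU : Node U1 b U2 <> LD) by discriminate.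
    destruct X as [| | |X1 a X2]; try discriminate.
    + destruct (substD_pure_reducible HT HF HU HV). now rewrite <- E.
    + destruct (substD_pure_reducible HT HF HU HV). now rewrite <- E.
    + simpl in HT, HF, HX.
      apply orb_false_iff in HT as [HT1 HT2], HF as [HF1 HF2], HX as [HX1 HX2].
      injection E as E1 -> E2.
      destruct (IH1 HT1 HF1 X1 V HX1 HV E1) as (S1 & HS1 & -> & EV1).
      destruct (IH2 HT2 HF2 X2 V HX2 HV E2) as (S2 & HS2 & -> & EV2).
      assert (S1 = S2) as <- by (apply repl_inj; congruence).
      now exists S1.
Qed.

Lemma irreducible_repl (X : tree) :
  hasD X = false -> irreducible X -> irreducible (repl yT yF LD X).
Proof.
  intros HX IX (U & V & HV & E & HD & HU & HT & HF).
  destruct (repl_eq_substD_pure U HT HF X V HX HV E) as (S & HS & EX & _).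
  apply IX. now exists U, S.
Qed.

End Grafting.

Lemma repl_T_injective (W : tree) : hasT W = true ->
  forall X Y : tree, hasD X = false -> hasD Y = false ->
  repl W LF LD X = repl W LF LD Y -> X = Y.
Proof.
  intros HW. apply repl_injective.
  - intros ->. discriminate.
  - intros. now apply repl_T_Node_neq.
  - discriminate.
Qed.

Lemma repl_F_injective (W : tree) : hasF W = true ->
  forall X Y : tree, hasD X = false -> hasD Y = false ->
  repl LT W LD X = repl LT W LD Y -> X = Y.
Proof.
  intros HW. apply repl_injective.
  - intros <-. discriminate.
  - discriminate.
  - intros. now apply repl_F_Node_neq.
Qed.

Lemma se_hasD (P : term A) : hasD (se P) = false.
Proof.
  induction P; simpl; auto; rewrite hasD_repl; simpl;
    repeat match goal with H : hasD _ = false |- _ => rewrite H end; btauto.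
Qed.

Lemma Tterm_se (P : term A) : Tterm P -> hasT (se P) = true /\ hasF (se P) = false.
Proof.
  induction 1 as [|a P1 P2 _ [T1 F1] _ [T2 F2]]; simpl; auto.
  rewrite repl_hasF_false by exact F1. simpl. now rewrite T1, F1, T2, F2.
Qed.

Lemma Fterm_se (P : term A) : Fterm P -> hasF (se P) = true /\ hasT (se P) = false.
Proof.
  induction 1 as [|a P1 P2 _ [F1 T1] _ [F2 T2]]; simpl; auto.
  rewrite repl_hasT_false by exact T1. simpl. now rewrite T1, F1, T2, F2.
Qed.

Definition star_tree (P : term A) : Prop :=
  hasT (se P) = true /\ hasF (se P) = true /\ irreducible (se P).

Lemma lterm_star_tree (P : term A) : lterm P -> star_tree P.
Proof.
  destruct 1 as [a P1 P2 H1 H2 | a P1 P2 H1 H2];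
    destruct (Tterm_se _ H1) as [T1 F1], (Fterm_se _ H2) as [F2 T2];
    unfold star_tree; simpl; rewrite repl_hasF_false by exact F1;
    rewrite T1, F1, T2, F2; repeat split; auto;
    apply irreducible_Node; rewrite ?T1, ?F1, ?T2, ?F2; auto.
Qed.

Scheme sterm_mut := Induction for sterm Sort Prop
with cterm_mut := Induction for cterm Sort Prop
with dterm_mut := Induction for dterm Sort Prop.
Combined Scheme star_term_ind from sterm_mut, cterm_mut, dterm_mut.

Lemma star_term_star_tree :
  (forall P, sterm P -> star_tree P) /\ (forall P, cterm P -> star_tree P) /\
  (forall P, dterm P -> star_tree P).
Proof.
  apply star_term_ind; auto using lterm_star_tree;
    intros P Q _ [T1 [F1 I1]] _ [T2 [F2 I2]]; unfold star_tree; simpl;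
    rewrite hasT_repl, hasF_repl, T1, F1, T2, F2; simpl; rewrite ?orb_true_r;
    repeat split.
  - apply irreducible_repl; auto using irreducible_LF, se_hasD. exact (repl_T_injective _ T2).
  - apply irreducible_repl; auto using irreducible_LT, se_hasD. exact (repl_F_injective _ F2).
Qed.

Lemma ctsd_unique {X Y Z Y' Z' : tree} :
  ctsd X Y Z -> ctsd X Y' Z' -> Y = Y' /\ Z = Z'.
Proof.
  intros (TZ & EX & HT & HF & _ & _ & IZ) (TZ' & EX' & HT' & HF' & _ & _ & IZ').
  apply substD_pure_irreducible_inj; auto. congruence.
Qed.

Lemma ctsd_tsd (X Y Z : tree) : ctsd X Y Z -> tsd X Y Z.
Proof.
  intros C. split; auto.
  intros (Y' & Z' & C' & Hne & _). apply Hne.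
  now destruct (ctsd_unique C C') as [<- <-].
Qed.

Lemma ctsd_se_AndS (P Q : term A) : Tterm P -> sterm Q ->
  ctsd (se (AndS P Q)) (repl LD LF LD (se P)) (se Q).
Proof.
  intros HP HQ.
  destruct (Tterm_se _ HP) as [PT PF].
  destruct (proj1 star_term_star_tree Q HQ) as (QT & QF & QI).
  unfold ctsd, inTA, substD.
  rewrite hasT_repl, hasF_repl, PF, se_hasD, repl_repl. simpl.
  rewrite !andb_false_r. repeat split; auto using se_hasD, repl_hasD_false.
Qed.

End Trees.

Theorem theorem3p7 (A : Type) (HA : inhabited A) (P Q : term A) :
  Tterm P -> sterm Q ->
  tsd (se (AndS P Q)) (repl LD LF LD (se P)) (se Q) /\
  (forall Y Z : tree A, tsd (se (AndS P Q)) Y Z ->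
     Y = repl LD LF LD (se P) /\ Z = se Q).
Proof.
  intros HP HQ.
  assert (C : ctsd (se (AndS P Q)) (repl LD LF LD (se P)) (se Q))
    by now apply ctsd_se_AndS.
  split.
  - now apply ctsd_tsd.
  - intros Y Z [C' _]. exact (ctsd_unique _ C' C).
Qed.
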